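(* Let $N=pq$ where $1<p\le q$ are primes (not necessarily distinct), with $N$ odd, let $M=(N-1)/2$, let $r$ be an integer with $0<r\le M$, and let $$L_0=\max\{k=p^{\ell}q^{m} : \ell,m\in\{0,1\},\ k\le r\}.$$ Then for every integer $L$ with $L_0\le L\le M$, the inverse problem $\mathrm{IP}(N,r,L)$ is uniquely solvable; that is, for any two distinct ${\tt x},{\tt y}\in\Omega(N,r)$ there is some $m\in\{1,\dots,L\}$ with $\tilde{x}_m\neq\tilde{y}_m$.
   Context: For a vector ${\tt v}=(v_1,\dots,v_N)$ of odd length $N>1$, its DFT coefficients are $\tilde{v}_m=\sum_{n=1}^N v_n e^{\mathrm{i}\xi m n}$ with $\xi=2\pi/N$. A vector is binary if its entries are $0$ or $1$; $\Omega(N,r)$ is the set of binary vectors of length $N$ with exactly $r$ ones. For $1\le L\le M$, two vectors ${\tt x},{\tt y}\in\Omega(N,r)$ are $L$-distinguishable if $\tilde{x}_m\neq\tilde{y}_m$ for some $m\in\{1,\dots,L\}$. The inverse problem $\mathrm{IP}(N,r,L)$ (recovering ${\tt x}\in\Omega(N,r)$ from $\tilde{x}_1,\dots,\tilde{x}_L$) is uniquely solvable if all pairs of distinct vectors in $\Omega(N,r)$ are $L$-distinguishable. *)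

From Stdlib Require Import Reals Arith List Bool ZArith Znumtheory.
From Coquelicot Require Import Coquelicot.
Import ListNotations.
Open Scope R_scope.

Definition cexpi (t : R) : C := (cos t, sin t).

(* A vector v = (v_1,...,v_N) is a list of length N; v_n = nth (n-1) v. *)
Fixpoint dft_from (v : list bool) (N m n : nat) : C :=
  match v with
  | nil => RtoC 0
  | b :: v' =>
      Cplus (Cmult (RtoC (if b then 1 else 0))
                   (cexpi (2 * PI / INR N * INR m * INR n)))
            (dft_from v' N m (S n))
  end.

(* DFT coefficient  ~v_m = sum_{n=1}^N v_n e^{i xi m n},  xi = 2 pi / N *)
Definition dft (v : list bool) (m : nat) : C := dft_from v (length v) m 1.

Definition Omega (N r : nat) (x : list bool) : Prop :=
  length x = N /\ count_occ bool_dec x true = r.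

Definition L_distinguishable (L : nat) (x y : list bool) : Prop :=
  exists m : nat, (1 <= m <= L)%nat /\ dft x m <> dft y m.

Definition IP_uniquely_solvable (N r L : nat) : Prop :=
  forall x y, Omega N r x -> Omega N r y -> x <> y -> L_distinguishable L x y.

Definition L0 (p q r : nat) : nat :=
  fold_right Nat.max 0%nat (filter (fun k => Nat.leb k r) [1%nat; p; q; (p * q)%nat]).

From Stdlib Require Import Reals Arith List Bool ZArith Znumtheory.
From Coquelicot Require Import Coquelicot.
From Stdlib Require Import Lia Lra Classical.
From mathcomp Require all_boot all_algebra all_field.
From mathcomp Require zify ring lra Rstruct complex.

(* Let w = exp(2 i pi / N), d = x - y and D(z) = sum_k d_k z^k, so that
   x~_m - y~_m = w^m D(w^m).  As D has rational coefficients and the cyclotomic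
   polynomials are irreducible over Q, D vanishes at all primitive n-th roots of
   unity as soon as it vanishes at one of them.  We know D(1) = 0 (both vectors
   have r ones) and D(w) = 0; also D(w^p) = 0 if p <= L and D(w^q) = 0 if q <= L,
   and w^p, w^q are primitive q-th and p-th roots.
   - If q <= r, D vanishes at every N-th root of unity, hence d = 0.
   - If p <= r < q, or p = q, D vanishes wherever z^p <> 1, so d is p-periodic and
     a nonzero d_k would give q > r ones along the coset k + pZ in x or in y.
   - If r < p < q, let T_k and U_k be the sums of d over k + pZ and k + qZ.  The
     transform of N d - p T - q U vanishes at all N-th roots of unity, so
     N d_k = p T_k + q U_k.  All coset sums of x and y are at most r < p, so comparing
     this identity first mod p and then exactly forces d_k = 0. *)

Definition theta (N : nat) : R := 2 * PI / INR N.

Lemma dft_angle N m n : 2 * PI / INR N * INR m * INR n = INR (m * n) * theta N.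
Proof. unfold theta; rewrite mult_INR; ring. Qed.

Lemma INR_mul_theta N : (0 < N)%nat -> INR N * theta N = 2 * PI.
Proof.
intros HN; unfold theta.
assert (0 < INR N) by (apply lt_0_INR; lia).
field; lra.
Qed.

Lemma INR_mul_theta_bounds N k : (0 < k < N)%nat -> 0 < INR k * theta N < 2 * PI.
Proof.
intros Hk.
assert (HN : 0 < INR N) by (apply lt_0_INR; lia).
assert (Hk0 : 0 < INR k) by (apply lt_0_INR; lia).
assert (HkN : INR k < INR N) by (apply lt_INR; lia).
assert (HPI := PI_RGT_0).
unfold theta; split.
- apply Rmult_lt_0_compat; [lra |].
  apply Rdiv_lt_0_compat; lra.
- apply (Rmult_lt_reg_r (INR N)); [lra |].
  replace (INR k * (2 * PI / INR N) * INR N) with (INR k * (2 * PI)) by (field; lra).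
  nra.
Qed.

Lemma cos_neq1 x : 0 < x < 2 * PI -> cos x <> 1.
Proof.
intros [Hx0 Hx2] Hcos.
assert (HPI := PI_RGT_0).
destruct (Rle_lt_dec x PI) as [HxPI | HxPI].
- assert (Hlt : cos x < cos 0) by (apply cos_decreasing_1; lra).
  rewrite cos_0 in Hlt; lra.
- replace x with (2 * PI - (2 * PI - x)) in Hcos by ring.
  rewrite cos_minus, cos_2PI, sin_2PI in Hcos.
  assert (Hlt : cos (2 * PI - x) < cos 0) by (apply cos_decreasing_1; lra).
  rewrite cos_0 in Hlt; lra.
Qed.

Lemma S_INR_mul k a : a + INR k * a = INR (S k) * a.
Proof. rewrite S_INR; ring. Qed.

Lemma le_fold_max_filter (l : list nat) k r : In k l -> (k <= r)%nat ->
  (k <= fold_right Nat.max 0 (filter (fun k => Nat.leb k r) l))%nat.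
Proof.
induction l as [|a l IH]; simpl; intros Hk Hkr; [contradiction |].
destruct Hk as [<- | Hk].
- rewrite (proj2 (Nat.leb_le _ _) Hkr); simpl; lia.
- destruct (Nat.leb a r); simpl; [specialize (IH Hk Hkr); lia | auto].
Qed.

Module BinaryDFT.
Import all_boot all_algebra all_field zify ring lra Rstruct complex.
Set Implicit Arguments. Unset Strict Implicit. Unset Printing Implicit Defensive.
Import GRing.Theory Num.Theory.
Local Open Scope ring_scope.

Lemma map_Cyclotomic (F : fieldType) n (z : F) :
  n.-primitive_root z -> map_poly intr 'Phi_n = cyclotomic z n.
Proof.
elim/ltn_ind: n z => n IHn z prim_z.
have n_gt0 := prim_order_gt0 prim_z.
have [uDn _ inDn] := divisors_correct n_gt0.
pose q := \prod_(d <- rem n (divisors n)) 'Phi_d.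
have mapq : map_poly (intr : int -> F) q =
            \prod_(d <- rem n (divisors n)) cyclotomic (z ^+ (n %/ d)) d.
  rewrite rmorph_prod /=; apply: eq_big_seq => d.
  rewrite mem_rem_uniq ?inE //= inDn => /andP[nd ddvn].
  by rewrite (IHn d _ (z ^+ (n %/ d))) ?dvdn_prim_root // ltn_neqAle nd dvdn_leq.
have q_neq0 : map_poly (intr : int -> F) q != 0.
  by apply/monic_neq0/monic_map; rewrite monic_prod // => d _; apply: Cyclotomic_monic.
apply: (mulIf q_neq0); rewrite -rmorphM /=.
have := prod_Cyclotomic n_gt0; rewrite (big_rem n) ?inDn //= -/q => ->.
have := prod_cyclotomic prim_z; rewrite (big_rem n) ?inDn //= divnn n_gt0 expr1 -mapq.
by move=> <-; rewrite rmorphB rmorph1 /= map_polyXn.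
Qed.

Local Notation PhiQ n := (map_poly intr 'Phi_n : {poly rat}).

Lemma ratr_PhiQ (F : numFieldType) n (z : F) :
  n.-primitive_root z -> map_poly ratr (PhiQ n) = cyclotomic z n.
Proof.
move=> prim_z; rewrite -(map_Cyclotomic prim_z) -map_poly_comp.
by apply: eq_map_poly => a /=; rewrite ratr_int.
Qed.

Lemma PhiQ_dvd_of_algC_root n (u : algC) (D : {poly rat}) :
  n.-primitive_root u -> root (map_poly ratr D) u -> PhiQ n %| D.
Proof.
move=> prim_u; have [P [minP _] minPdvd] := minCpolyP u.
suff -> : PhiQ n = P by rewrite minPdvd.
apply: (@map_inj_poly _ _ (ratr : rat -> algC)); [exact: fmorph_inj | by rewrite rmorph0 |].
by rewrite -minP (minCpoly_cyclotomic prim_u) (ratr_PhiQ prim_u).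
Qed.

(* Irreducibility of Phi_n over Q, carried from algC to any field of characteristic 0
   through a root of gcdp (PhiQ n) D in algC. *)
Lemma PhiQ_dvd_of_root (F : numFieldType) n (z : F) (D : {poly rat}) :
  n.-primitive_root z -> root (map_poly ratr D) z -> PhiQ n %| D.
Proof.
move=> prim_z Dz.
have Phiz : root (map_poly ratr (PhiQ n)) z by rewrite (ratr_PhiQ prim_z) root_cyclotomic.
have [coPhiD | ncoPhiD] := boolP (coprimep (PhiQ n) D).
  have /Bezout_coprimepP[[u v] /=] := coPhiD.
  rewrite -(eqp_map (ratr : {rmorphism rat -> F})) => /eqp_root/(_ z).
  rewrite rmorph1 (negbTE (root1 z)) rmorphD !rmorphM /=.
  by rewrite rootE !hornerE (rootP Phiz) (rootP Dz) !mulr0 addr0 eqxx.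
have [u prim_u] := C_prim_root_exists (prim_order_gt0 prim_z).
have [v gv] : exists v : algC, root (map_poly ratr (gcdp (PhiQ n) D)) v.
  by apply/closed_rootP; rewrite size_map_inj_poly ?rmorph0 //; exact: fmorph_inj.
apply: PhiQ_dvd_of_algC_root (root_dvdp _ gv); last by rewrite dvdp_map dvdp_gcdr.
rewrite -(root_cyclotomic prim_u) -(ratr_PhiQ prim_u).
by apply: root_dvdp gv; rewrite dvdp_map dvdp_gcdl.
Qed.

Lemma root_prim_root_conj (F : numFieldType) n (z z' : F) (D : {poly rat}) :
  n.-primitive_root z -> n.-primitive_root z' ->
  root (map_poly ratr D) z -> root (map_poly ratr D) z'.
Proof.
move=> prim_z prim_z' /(PhiQ_dvd_of_root prim_z)/dvdpP[E ->].
by rewrite rmorphM rootM /= (ratr_PhiQ prim_z') (root_cyclotomic prim_z') prim_z' orbT.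
Qed.

(* Exponents m - t rather than t: in genfun_orbit_sum they appear as z^(- t c) = (z^c)^(m - t). *)
Lemma sum_expr_root_of_unity (F : idomainType) (u : F) m : u ^+ m = 1 ->
  \sum_(t < m) u ^+ (m - t) = if u == 1 then m%:R else 0.
Proof.
move=> um; have [-> | u_neq1] := eqVneq u 1.
  by under eq_bigr do rewrite expr1n; rewrite sumr_const card_ord.
rewrite (reindex_inj rev_ord_inj) /=.
under eq_bigr => t _ do rewrite subKn // exprS.
rewrite -mulr_sumr; apply/eqP.
have : (u - 1) * (u * \sum_(t < m) u ^+ t) == 0 by rewrite mulrCA -subrX1 um subrr mulr0.
by rewrite mulf_eq0 subr_eq0 (negbTE u_neq1).
Qed.

Section FiniteFourier.
Variables (F : numFieldType) (N : nat).
Implicit Types (f g : nat -> rat) (z : F).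

Definition genfun f z := \sum_(k < N) ratr (f k) * z ^+ k.

Lemma genfun_poly f z : genfun f z = (map_poly ratr (\poly_(k < N) f k)).[z].
Proof.
suff -> : map_poly ratr (\poly_(k < N) f k) = \poly_(k < N) ratr (f k) :> {poly F}.
  by rewrite horner_poly.
by apply/polyP => i; rewrite coef_map /= !coef_poly; case: ifP; rewrite ?rmorph0.
Qed.

Lemma genfunD f g z : genfun (fun k => f k + g k) z = genfun f z + genfun g z.
Proof. by rewrite /genfun -big_split; apply: eq_bigr => k _; rewrite rmorphD mulrDl. Qed.

Lemma genfunN f z : genfun (fun k => - f k) z = - genfun f z.
Proof. by rewrite /genfun -sumrN; apply: eq_bigr => k _; rewrite rmorphN mulNr. Qed.

Lemma genfunB f g z : genfun (fun k => f k - g k) z = genfun f z - genfun g z.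
Proof. by rewrite genfunD genfunN. Qed.

Lemma genfunZ c f z : genfun (fun k => c * f k) z = ratr c * genfun f z.
Proof. by rewrite /genfun mulr_sumr; apply: eq_bigr => k _; rewrite rmorphM mulrA. Qed.

Lemma genfun_sum m (f : 'I_m -> nat -> rat) z :
  genfun (fun k => \sum_(t < m) f t k) z = \sum_(t < m) genfun (f t) z.
Proof. by rewrite /genfun exchange_big; apply: eq_bigr => k _; rewrite rmorph_sum mulr_suml. Qed.

Lemma genfun_conj n f z z' : n.-primitive_root z -> n.-primitive_root z' ->
  genfun f z = 0 -> genfun f z' = 0.
Proof.
move=> prim_z prim_z'; rewrite !genfun_poly.
by move=> /rootP/(root_prim_root_conj prim_z prim_z')/rootP.
Qed.

Hypothesis N_gt0 : (0 < N)%N.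

Lemma genfun_shift s f z : z ^+ N = 1 ->
  z ^+ s * genfun (fun k => f ((k + s) %% N)%N) z = genfun f z.
Proof.
move=> zN; rewrite /genfun mulr_sumr.
pose h (k : 'I_N) : 'I_N := Ordinal (ltn_pmod (k + s) N_gt0).
have h_inj : injective h.
  move=> a b /(congr1 val) /= /eqP; rewrite eqn_modDr !modn_small //.
  by move=> /eqP ab; apply: val_inj.
rewrite [RHS](reindex_inj h_inj) /=; apply: eq_bigr => k _.
by rewrite mulrCA -exprD (expr_mod _ zN) addnC.
Qed.

Definition orbit_sum c m f k := \sum_(t < m) f ((k + t * c) %% N)%N.

Lemma genfun_orbit_sum c m f z : N = (m * c)%N -> z ^+ N = 1 ->
  genfun (orbit_sum c m f) z = (if z ^+ c == 1 then m%:R else 0) * genfun f z.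
Proof.
move=> Nmc zN; have zcm : (z ^+ c) ^+ m = 1 by rewrite -exprM mulnC -Nmc.
rewrite /orbit_sum genfun_sum -(sum_expr_root_of_unity zcm) mulr_suml.
apply: eq_bigr => t _; rewrite -[in RHS](genfun_shift (t * c) _ zN) mulrA -!exprM -exprD.
by rewrite [(t * c)%N]mulnC -mulnDr subnK 1?ltnW // [(c * m)%N]mulnC -Nmc zN mul1r.
Qed.

Variable w : F.
Hypothesis prim_w : N.-primitive_root w.

Lemma genfun_eq0 f : (forall j, (j < N)%N -> genfun f (w ^+ j) = 0) ->
  forall k, (k < N)%N -> f k = 0.
Proof.
move=> f_w k kN.
suff /(congr1 (coefp k)) : \poly_(k < N) f k = 0 by rewrite /= coef_poly kN coef0.
apply/eqP; apply: contraT; rewrite -(map_poly_eq0 (ratr : {rmorphism rat -> F})) => nz.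
pose rs := [seq w ^+ j | j <- iota 0 N].
have roots : all (root (map_poly ratr (\poly_(k < N) f k))) rs.
  apply/allP => z /mapP[j]; rewrite mem_iota add0n => jN ->.
  by rewrite /root -genfun_poly f_w.
have uniq_rs : uniq rs.
  rewrite map_inj_in_uniq ?iota_uniq // => i j; rewrite !mem_iota !add0n => iN jN /eqP.
  by rewrite (eq_prim_root_expr prim_w) !modn_small // => /eqP.
have := max_poly_roots nz roots uniq_rs.
by rewrite size_map size_iota ltnNge size_map_poly size_poly.
Qed.
End FiniteFourier.

Section NatFacts.
Local Open Scope nat_scope.

Lemma dvdn_pq_cases p q m : prime p -> prime q -> m %| p * q ->
  [\/ m = 1, m = p, m = q | m = p * q].
Proof.
move=> p_pr /primeP[_ q_div] m_dvd; have [p_dvd | p_ndvd] := boolP (p %| m).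
  have Em : m = p * (m %/ p) by rewrite mulnC divnK.
  move: m_dvd; rewrite Em dvdn_pmul2l ?prime_gt0 // => /q_div/orP[]/eqP->.
    by rewrite muln1; constructor 2.
  by constructor 4.
move: m_dvd; rewrite Gauss_dvdr; last by rewrite coprime_sym prime_coprime.
by move=> /q_div/orP[]/eqP->; [constructor 1 | constructor 3].
Qed.

Lemma sum_orbit_le (X : nat -> nat) N c m k : N = m * c -> 0 < c ->
  \sum_(t < m) X ((k + t * c) %% N) <= \sum_(j < N) X j.
Proof.
move=> -> c_gt0; have [-> | m_gt0] := posnP m; first by rewrite big_ord0.
have N_gt0 : 0 < m * c by rewrite muln_gt0 m_gt0.
rewrite -(big_mkord xpredT (fun t => X ((k + t * c) %% (m * c)))).
rewrite -(big_map (fun t => (k + t * c) %% (m * c)) xpredT X) -(big_mkord xpredT X).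
apply: (uniq_sub_le_big leqnn (fun a b => leq_addr b a)); last 2 first.
- exact: iota_uniq.
- by move=> j /mapP[t _ ->]; rewrite mem_index_iota ltn_pmod.
rewrite map_inj_in_uniq ?iota_uniq // => a b; rewrite !mem_index_iota => am bm /eqP.
by rewrite eqn_modDl -!muln_modl !modn_small // eqn_pmul2r // => /eqP.
Qed.

Lemma small_orbit_sums_neq p q r Tx Ty Ux Uy : coprime p q -> r < p <= q ->
  Tx <= r -> Ux <= r -> Uy <= r ->
  p * q + p * Ty + q * Uy <> p * Tx + q * Ux.
Proof.
move=> co_pq /andP[rp pq] Txr Uxr Uyr E.
have le_of_dvd a b : a <= r -> p %| q * (a - b) -> a <= b.
  move=> ar; rewrite Gauss_dvdr //; apply: contraTT; rewrite -ltnNge => ba.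
  by rewrite /dvdn modn_small; lia.
have EU : Ux = Uy.
  apply/eqP; rewrite eqn_leq; apply/andP; split; apply: le_of_dvd => //; apply/dvdnP.
  - by exists (q + Ty - Tx); rewrite [_ * p]mulnC !mulnBr mulnDr; lia.
  - by exists (Tx - (q + Ty)); rewrite [_ * p]mulnC !mulnBr mulnDr; lia.
have : p * (q + Ty) = p * Tx by rewrite mulnDr; lia.
by move/eqP; rewrite eqn_pmul2l ?(leq_ltn_trans _ rp) //; lia.
Qed.

End NatFacts.

Lemma root_unity_pq_cases (F : fieldType) p q (z : F) : prime p -> prime q ->
  z ^+ (p * q) = 1 ->
  [\/ z = 1, p.-primitive_root z, q.-primitive_root z | (p * q).-primitive_root z].
Proof.
move=> p_pr q_pr zN.
have N_gt0 : (0 < p * q)%N by rewrite muln_gt0 !prime_gt0.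
have [m prim_m /(dvdn_pq_cases p_pr q_pr)] := prim_order_exists N_gt0 zN.
by case=> Em; rewrite Em in prim_m; [constructor 1; rewrite -(prim_expr_order prim_m) expr1
  | constructor 2 | constructor 3 | constructor 4].
Qed.

Lemma natr_bool_subr_eq (a b a' b' : bool) : a' != b' ->
  (a%:R - b%:R : rat) = a'%:R - b'%:R -> a = a' /\ b = b'.
Proof. by case: a b a' b' => [] [] [] [] //= _; lra. Qed.

Lemma natr_orbit_identity N p q (a b Tx Ty Ux Uy : nat) :
  N%:R * (a%:R - b%:R) - p%:R * (Tx%:R - Ty%:R) - q%:R * (Ux%:R - Uy%:R) = 0 :> rat ->
  (N * a + p * Ty + q * Uy = N * b + p * Tx + q * Ux)%N.
Proof. by move=> E; apply/eqP; rewrite -(eqr_nat rat) !natrD !natrM; apply/eqP; lra. Qed.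

Section BinaryVectors.
Variables (F : numFieldType) (p q r : nat) (w : F) (x y : nat -> bool).
Hypotheses (p_prime : prime p) (q_prime : prime q) (prim_w : (p * q).-primitive_root w).
Hypotheses (sum_x : (\sum_(k < p * q) x k)%N = r) (sum_y : (\sum_(k < p * q) y k)%N = r).
Local Notation N := (p * q)%N.

Definition vdiff k : rat := (x k)%:R - (y k)%:R.

Let N_gt0 : (0 < N)%N. Proof. by rewrite muln_gt0 !prime_gt0. Qed.

Let root_unity_expr j : (w ^+ j) ^+ N = 1.
Proof. by rewrite exprAC (prim_expr_order prim_w) expr1n. Qed.

Let root_unity_neq0 (z : F) : z ^+ N = 1 -> z != 0.
Proof. by move=> zN; apply: contra_eq_neq zN => ->; rewrite expr0n gtn_eqF // eq_sym oner_eq0. Qed.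

Lemma genfun_vdiff1 : genfun N vdiff (1 : F) = 0.
Proof.
rewrite /genfun; under eq_bigr do rewrite expr1n mulr1 rmorphB /= !ratr_nat.
by rewrite sumrB -!natr_sum sum_x sum_y subrr.
Qed.

Lemma eq_of_genfun_vdiff_eq0 : (forall z : F, z ^+ N = 1 -> genfun N vdiff z = 0) ->
  forall k, (k < N)%N -> x k = y k.
Proof.
move=> D0 k kN; have : vdiff k = 0.
  by apply: (genfun_eq0 prim_w _ kN) => j _; rewrite D0.
by move/eqP; rewrite subr_eq0 eqr_nat; case: (x k) (y k) => [] [].
Qed.

Lemma eq_of_genfun_vdiff_eq0_outside_roots c m : N = (m * c)%N -> (r < m)%N ->
  (forall z : F, z ^+ N = 1 -> z ^+ c != 1 -> genfun N vdiff z = 0) ->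
  forall k, (k < N)%N -> x k = y k.
Proof.
move=> Nmc rm D0.
have c_gt0 : (0 < c)%N by move: N_gt0; rewrite Nmc muln_gt0 => /andP[].
have step k : (k < N)%N -> vdiff ((k + c) %% N) = vdiff k.
  move=> kN; apply/eqP; rewrite -subr_eq0; apply/eqP.
  apply: (genfun_eq0 prim_w (f := fun k => vdiff ((k + c) %% N) - vdiff k) _ kN) => j _.
  move: (w ^+ j) (root_unity_expr j) => z zN; have shift := genfun_shift N_gt0 c vdiff zN.
  rewrite genfunB; have [zc1 | zc_neq1] := eqVneq (z ^+ c) 1.
    by rewrite -shift zc1 mul1r subrr.
  move: shift; rewrite D0 // subr0 => /eqP; rewrite mulf_eq0 expf_eq0.
  by rewrite (negbTE (root_unity_neq0 zN)) andbF => /eqP.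
have orbit t k : (k < N)%N -> vdiff ((k + t * c) %% N) = vdiff k.
  move=> kN; elim: t => [|t IHt]; first by rewrite mul0n addn0 modn_small.
  by rewrite mulSnr addnA -modnDml step ?ltn_pmod.
move=> k kN; apply/eqP; apply: contraT => xy_neq.
have [v [sum_v v_orbit]] : exists v : nat -> bool,
    (\sum_(j < N) v j)%N = r /\ forall t, v ((k + t * c) %% N)%N.
  have orbit_xy t := natr_bool_subr_eq xy_neq (orbit t k kN).
  have [xk | xk] := boolP (x k); [exists x | exists y]; split => // t.
    by case: (orbit_xy t) => -> _.
  by case: (orbit_xy t) => _ ->; case: (x k) (y k) xy_neq xk => [] [] //=.
have := sum_orbit_le (fun j => v j : nat) k Nmc c_gt0; rewrite sum_v.
by under eq_bigr do rewrite v_orbit; rewrite sum1_card card_ord; lia.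
Qed.

Lemma eq_of_genfun_vdiff_eq0_prim : p != q -> (r < p <= q)%N ->
  (forall z : F, N.-primitive_root z -> genfun N vdiff z = 0) ->
  forall k, (k < N)%N -> x k = y k.
Proof.
move=> pq_neq rpq D0.
have co_pq : coprime p q by rewrite prime_coprime // dvdn_prime2.
pose T := orbit_sum N p q vdiff; pose U := orbit_sum N q p vdiff.
pose h k := N%:R * vdiff k - p%:R * T k - q%:R * U k.
(* The transform of h is (N - p q [z^p = 1] - q p [z^q = 1]) D(z). *)
have h0 k : (k < N)%N -> h k = 0.
  move=> kN; apply: (genfun_eq0 prim_w _ kN) => j _.
  move: (w ^+ j) (root_unity_expr j) => z zN.
  rewrite /h !genfunB !genfunZ !genfun_orbit_sum // ?(mulnC q p) // !ratr_nat.
  case: (root_unity_pq_cases p_prime q_prime zN) => [-> | prim_z | prim_z | prim_z].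
  - by rewrite genfun_vdiff1; ring.
  - rewrite (prim_expr_order prim_z) -(prim_order_dvd prim_z) dvdn_prime2 //.
    by rewrite (negbTE pq_neq) eqxx natrM; ring.
  - rewrite (prim_expr_order prim_z) -(prim_order_dvd prim_z) dvdn_prime2 // eq_sym.
    by rewrite (negbTE pq_neq) eqxx natrM; ring.
  - by rewrite D0 //; ring.
have orbit_le (v : nat -> bool) c m k : N = (m * c)%N -> prime c ->
    (\sum_(j < N) v j)%N = r -> (\sum_(t < m) v ((k + t * c) %% N)%N <= r)%N.
  by move=> Nmc /prime_gt0 c_gt0 <-; apply: (sum_orbit_le (fun j => v j : nat) k Nmc c_gt0).
have Nqp : N = (q * p)%N by rewrite mulnC.
move=> k kN; have := h0 k kN; rewrite /h /T /U /orbit_sum /vdiff !sumrB -!natr_sum.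
have Tx_le := orbit_le x p q k Nqp p_prime sum_x.
have Ty_le := orbit_le y p q k Nqp p_prime sum_y.
have Ux_le := orbit_le x q p k erefl q_prime sum_x.
have Uy_le := orbit_le y q p k erefl q_prime sum_y.
move=> /natr_orbit_identity; case: (x k) (y k) => [] [] //=; rewrite muln1 muln0 add0n => E.
- by case: (small_orbit_sums_neq co_pq rpq Tx_le Ux_le Uy_le E).
- by case: (small_orbit_sums_neq co_pq rpq Ty_le Uy_le Ux_le (esym E)).
Qed.

Lemma eq_of_low_genfun_vdiff_eq0 L : (p <= q)%N -> (0 < L)%N ->
  ((p <= r)%N -> (p <= L)%N) -> ((q <= r)%N -> (q <= L)%N) ->
  (forall m, (0 < m <= L)%N -> genfun N vdiff (w ^+ m) = 0) ->
  forall k, (k < N)%N -> x k = y k.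
Proof.
move=> pq L_gt0 pL qL Dw.
have D_prim n m (z : F) : (0 < m <= L)%N -> n.-primitive_root (w ^+ m) ->
    n.-primitive_root z -> genfun N vdiff z = 0.
  by move=> mL prim_wm prim_z; apply: genfun_conj prim_wm prim_z (Dw m mL).
have DN (z : F) : N.-primitive_root z -> genfun N vdiff z = 0.
  by apply: (D_prim _ 1%N); rewrite ?expr1 ?L_gt0.
have Dq (z : F) : (p <= r)%N -> q.-primitive_root z -> genfun N vdiff z = 0.
  move=> pr; apply: (D_prim _ p); first by rewrite prime_gt0 ?pL.
  by rewrite -(mulnK p (prime_gt0 q_prime)) dvdn_prim_root // dvdn_mull.
have Dp (z : F) : (q <= r)%N -> p.-primitive_root z -> genfun N vdiff z = 0.
  move=> qr; apply: (D_prim _ q); first by rewrite prime_gt0 ?qL.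
  by rewrite -(mulKn q (prime_gt0 p_prime)) dvdn_prim_root // dvdn_mulr.
have [qr | rq] := leqP q r.
  apply: eq_of_genfun_vdiff_eq0 => z /(root_unity_pq_cases p_prime q_prime).
  case=> [-> | /(Dp _ qr) | /(Dq _ (leq_trans pq qr)) | /DN] //; exact: genfun_vdiff1.
have [pr_or_pq | ] := boolP ((p <= r)%N || (p == q)).
  apply: (eq_of_genfun_vdiff_eq0_outside_roots (mulnC p q) rq) => z.
  move=> /(root_unity_pq_cases p_prime q_prime).
  case=> [-> | prim_z | prim_z | /DN //]; first by rewrite expr1n eqxx.
    by rewrite (prim_expr_order prim_z) eqxx.
  case/orP: pr_or_pq => [pr _ | /eqP pq_eq]; first exact: Dq.
  by rewrite pq_eq (prim_expr_order prim_z) eqxx.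
rewrite negb_or -ltnNge => /andP[rp pq_neq].
by apply: eq_of_genfun_vdiff_eq0_prim => //; rewrite rp.
Qed.
End BinaryVectors.

Definition toRi (z : C) : R[i] := (fst z +i* snd z)%C.
Definition expi (t : R) : R[i] := toRi (cexpi t).

Lemma toRi_add a b : toRi (Cplus a b) = toRi a + toRi b.
Proof. by case: a => a1 a2; case: b => b1 b2. Qed.

Lemma toRi_mul a b : toRi (Cmult a b) = toRi a * toRi b.
Proof. by case: a => a1 a2; case: b => b1 b2. Qed.

Lemma expiD a b : expi a * expi b = expi (Rplus a b).
Proof.
rewrite /expi /toRi /=; congr (_ +i* _)%C; first by rewrite cos_plus.
by rewrite sin_plus RplusE addrC.
Qed.

Lemma expi_natmul a k : expi a ^+ k = expi (Rmult (INR k) a).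
Proof.
elim: k => [|k IHk]; first by rewrite expr0 /expi /toRi /= Rmult_0_l cos_0 sin_0.
by rewrite exprS IHk expiD -S_INR_mul.
Qed.

Lemma prim_root_expi_theta N : (0 < N)%N -> N.-primitive_root (expi (theta N)).
Proof.
move=> N_gt0.
have wN : expi (theta N) ^+ N = 1.
  rewrite expi_natmul INR_mul_theta; last exact/ssrnat.ltP.
  by rewrite /expi /toRi /= cos_2PI sin_2PI.
have [m prim_m m_dvd] := prim_order_exists N_gt0 wN.
suff Em : m = N by rewrite Em in prim_m.
apply/eqP; rewrite eqn_leq dvdn_leq //=; apply: contraT; rewrite -ltnNge => mN.
have := congr1 (@complex.Re _) (prim_expr_order prim_m); rewrite expi_natmul /=.
have bounds := @INR_mul_theta_bounds N m
  (conj (ssrnat.ltP (prim_order_gt0 prim_m)) (ssrnat.ltP mN)).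
by move/(cos_neq1 _ bounds).
Qed.

Lemma size_length (T : Type) (l : list T) : size l = length l.
Proof. by elim: l => //= a l ->. Qed.

Lemma count_occ_true (l : list bool) :
  count_occ bool_dec l true = (\sum_(k < size l) nth false l k)%N.
Proof. by elim: l => [|b l IHl] /=; rewrite ?big_ord0 // big_ord_recl -IHl; case: b. Qed.

Lemma toRi_dft_from v N m n : toRi (dft_from v N m n) =
  \sum_(k < size v) (nth false v k)%:R * expi (theta N) ^+ (m * (n + k)).
Proof.
elim: v n => [|b v IHv] n /=; first by rewrite big_ord0.
rewrite toRi_add toRi_mul IHv big_ord_recl /= addn0 dft_angle -/(expi _) -expi_natmul.
congr (_ * _ + _); first by case: b.
by apply: eq_bigr => k _; rewrite addSnnS.
Qed.

Lemma toRi_dft v m : let w := expi (theta (size v)) in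
  toRi (dft v m) = w ^+ m * genfun (size v) (fun k => (nth false v k)%:R) (w ^+ m).
Proof.
rewrite /dft toRi_dft_from -size_length /genfun mulr_sumr.
apply: eq_bigr => k _; rewrite ratr_nat mulrCA -exprM -exprD.
by rewrite mulnDr muln1.
Qed.

Lemma prime_of_Zprime p : Znumtheory.prime (Z.of_nat p) -> prime p.
Proof.
move=> p_pr; apply/primeP; split; first by have := prime_ge_2 _ p_pr; lia.
move=> d /dvdnP[k Ek].
have /(prime_divisors _ p_pr) : (Z.of_nat d | Z.of_nat p)%Z.
  by exists (Z.of_nat k); rewrite Ek Nat2Z.inj_mul.
by case=> [|[|[|]]] Hd; lia.
Qed.

Lemma IP_uniquely_solvable_pq p q r L :
  Znumtheory.prime (Z.of_nat p) -> Znumtheory.prime (Z.of_nat q) ->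
  (p <= q)%coq_nat -> (1 <= L)%coq_nat ->
  ((p <= r)%coq_nat -> (p <= L)%coq_nat) -> ((q <= r)%coq_nat -> (q <= L)%coq_nat) ->
  IP_uniquely_solvable (p * q) r L.
Proof.
move=> /prime_of_Zprime p_pr /prime_of_Zprime q_pr /ssrnat.leP pq /ssrnat.leP L_gt0 pL qL.
move=> x y [size_x count_x] [size_y count_y] xy_neq; apply: NNPP => not_dist; apply: xy_neq.
rewrite -size_length in size_x; rewrite -size_length in size_y.
rewrite count_occ_true size_x in count_x; rewrite count_occ_true size_y in count_y.
have N_gt0 : (0 < p * q)%N by rewrite muln_gt0 !prime_gt0.
have prim_w := prim_root_expi_theta N_gt0.
have Dw m : (0 < m <= L)%N ->
    genfun (p * q) (vdiff (nth false x) (nth false y)) (expi (theta (p * q)) ^+ m) = 0.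
  move=> /andP[m_gt0 mL].
  have dft_eq : dft x m = dft y m.
    by apply: NNPP => neq; apply: not_dist; exists m; split=> //; split; apply/ssrnat.leP.
  move/eqP: (congr1 toRi dft_eq); rewrite !toRi_dft size_x size_y -subr_eq0 -mulrBr.
  by rewrite -genfunB mulf_eq0 expf_eq0 (prim_root_eq0 prim_w) eqn0Ngt N_gt0 andbF => /eqP.
apply: (@eq_from_nth _ false); rewrite size_x ?size_y // => k.
apply: (eq_of_low_genfun_vdiff_eq0 p_pr q_pr prim_w count_x count_y pq L_gt0 _ _ Dw).
- by move/ssrnat.leP/pL/ssrnat.leP.
- by move/ssrnat.leP/qL/ssrnat.leP.
Qed.
End BinaryDFT.

Theorem theorem2 (p q N r L : nat) :
  prime (Z.of_nat p) -> prime (Z.of_nat q) -> (1 < p <= q)%nat ->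
  N = (p * q)%nat -> Nat.Odd N ->
  (0 < r <= (N - 1) / 2)%nat ->
  (L0 p q r <= L <= (N - 1) / 2)%nat ->
  IP_uniquely_solvable N r L.
Proof.
intros p_pr q_pr [_ pq] -> _ [r_gt0 _] [L0_le _].
apply BinaryDFT.IP_uniquely_solvable_pq; auto.
- assert (1 <= L0 p q r)%nat by (apply le_fold_max_filter; simpl; auto; lia). lia.
- intros pr. assert (p <= L0 p q r)%nat by (apply le_fold_max_filter; simpl; auto). lia.
- intros qr. assert (q <= L0 p q r)%nat by (apply le_fold_max_filter; simpl; auto). lia.
Qed.
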